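(* Let $\phi$ be the monoid endomorphism of $\{1,-1\}^*$ determined by $\phi(1)=1\,1\,(-1)$ and $\phi(-1)=1\,(-1)\,(-1)$, and let $w_\alpha=\lim_{n\to\infty}\phi^n(1)$ be the infinite sequence over $\{1,-1\}$ obtained by iterating $\phi$ starting from the word $1$ (each $\phi^n(1)$ is a prefix of $\phi^{n+1}(1)$). Then $w_\alpha$ is cube-free, i.e. it contains no factor of the form $uuu$ with $u$ a nonempty finite word. *)

From mathcomp Require Import all_boot all_order all_algebra.
Set Implicit Arguments. Unset Strict Implicit. Unset Printing Implicit Defensive.
Local Open Scope ring_scope.

(* phi on letters: phi(1) = 1 1 (-1), phi(-1) = 1 (-1) (-1).
   Only the letters 1 and -1 ever occur; other integers are sent to the image of -1
   (irrelevant, never used). *)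
Definition phi_letter (a : int) : seq int :=
  if a == 1 then [:: 1; 1; -1] else [:: 1; -1; -1].

Definition phi (w : seq int) : seq int := flatten (map phi_letter w).

Definition phi_iter (n : nat) : seq int := iter n phi [:: 1].

(* The infinite word w_alpha = lim phi^n(1): its n-th letter (0-indexed) is
   read off phi^(n+1)(1), which has length 3^(n+1) > n; by the prefix property
   this is the common value of all sufficiently long iterates. *)
Definition w_alpha (n : nat) : int := nth 0 (phi_iter n.+1) n.

(* An infinite word w contains a factor uuu with |u| = p >= 1 starting at
   position i iff w (i + k) = w (i + k + p) for all k < 2p. *)
Definition has_cube (w : nat -> int) : Prop :=
  exists i p : nat, (0 < p)%N /\ forall k : nat, (k < 2 * p)%N -> w (i + k)%N = w (i + k + p)%N.

Definition cube_free (w : nat -> int) : Prop := ~ has_cube w.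

From mathcomp Require Import all_boot all_order all_algebra.
From mathcomp Require Import zify.

(* Reading w_alpha = phi(w_alpha) in blocks of three gives w(3n) = 1,
   w(3n+2) = -1 and w(3n+1) = w(n).  A cube of period p with 3 not dividing p
   forces w(i) = w(i+p) = w(i+2p) at three positions covering every residue
   mod 3, contradicting w(3n) <> w(3m+2).  A cube of period 3q, read at its
   positions congruent to 1 mod 3, yields a cube of period q; by descent on
   the period no cube exists. *)

Set Implicit Arguments.
Unset Strict Implicit.
Unset Printing Implicit Defensive.

Local Open Scope ring_scope.

Lemma phi_cat (s t : seq int) : phi (s ++ t) = phi s ++ phi t.
Proof. by rewrite /phi map_cat flatten_cat. Qed.

Lemma size_phi_letter (a : int) : size (phi_letter a) = 3%N.
Proof. by rewrite /phi_letter; case: (a == 1). Qed.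

Lemma size_phi (s : seq int) : size (phi s) = (3 * size s)%N.
Proof.
elim: s => [|a s IHs] //=.
by rewrite /phi /= size_cat -/(phi s) IHs size_phi_letter mulnS.
Qed.

Lemma size_phi_iter (n : nat) : size (phi_iter n) = (3 ^ n)%N.
Proof.
elim: n => [|n IHn] //.
by rewrite /phi_iter iterS size_phi -/(phi_iter n) IHn expnS.
Qed.

Lemma phi_iter_prefix (n : nat) : exists r, phi_iter n.+1 = phi_iter n ++ r.
Proof.
elim: n => [|n [r IHn]]; first by exists [:: 1; -1].
by exists (phi r); rewrite -phi_cat -IHn.
Qed.

Lemma nth_phi_iter_mono (n m k : nat) : (n <= m)%N -> (k < 3 ^ n)%N ->
  nth 0 (phi_iter m) k = nth 0 (phi_iter n) k.
Proof.
move=> le_nm lt_k; elim: m le_nm => [|m IHm]; first by rewrite leqn0 => /eqP ->.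
rewrite leq_eqVlt => /orP[/eqP -> // | lt_nm].
have [r ->] := phi_iter_prefix m.
rewrite nth_cat size_phi_iter (leq_trans lt_k) ?leq_exp2l ?IHm //.
Qed.

Lemma ltn_exp3S (k : nat) : (k < 3 ^ k.+1)%N.
Proof. by rewrite (ltn_trans (ltn_expl k (isT : 1 < 3)%N)) // ltn_exp2l. Qed.

Lemma w_alphaE (n k : nat) : (k < 3 ^ n)%N -> w_alpha k = nth 0 (phi_iter n) k.
Proof.
move=> lt_k; rewrite /w_alpha.
rewrite -(@nth_phi_iter_mono k.+1 (maxn n k.+1)) ?leq_maxr ?ltn_exp3S //.
by rewrite (@nth_phi_iter_mono n) ?leq_maxl.
Qed.

Lemma nth_phi (s : seq int) (i j : nat) : (j < 3)%N -> (i < size s)%N ->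
  nth 0 (phi s) (3 * i + j) = nth 0 (phi_letter (nth 0 s i)) j.
Proof.
move=> lt_j3; elim: s i => [|a s IHs] [|i] //= lt_i.
  by rewrite /phi /= nth_cat size_phi_letter muln0 add0n lt_j3.
rewrite /phi /= -/(phi s) nth_cat size_phi_letter.
have -> : (3 * i.+1 + j < 3)%N = false by lia.
have -> : (3 * i.+1 + j - 3 = 3 * i + j)%N by lia.
exact: IHs.
Qed.

Lemma w_alpha_block (i j : nat) : (j < 3)%N ->
  w_alpha (3 * i + j) = nth 0 (phi_letter (w_alpha i)) j.
Proof.
move=> lt_j3; have lt_i := ltn_exp3S i.
rewrite (@w_alphaE i.+2); last by rewrite expnS; lia.
rewrite (@w_alphaE i.+1) // /phi_iter iterS -/(phi_iter i.+1).
by rewrite nth_phi ?size_phi_iter.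
Qed.

Lemma w_alpha_mod3_0 (n : nat) : (n %% 3 = 0)%N -> w_alpha n = 1.
Proof.
move=> n_mod; rewrite (divn_eq n 3) n_mod mulnC w_alpha_block //.
by rewrite /phi_letter; case: (_ == 1).
Qed.

Lemma w_alpha_mod3_2 (n : nat) : (n %% 3 = 2)%N -> w_alpha n = -1.
Proof.
move=> n_mod; rewrite (divn_eq n 3) n_mod mulnC w_alpha_block //.
by rewrite /phi_letter; case: (_ == 1).
Qed.

Lemma w_alpha_sign (n : nat) : w_alpha n = 1 \/ w_alpha n = -1.
Proof.
elim/ltn_ind: n => n IHn.
have [n_mod|[n_mod|n_mod]] : (n %% 3 = 0 \/ n %% 3 = 1 \/ n %% 3 = 2)%N by lia.
- by left; apply: w_alpha_mod3_0.
- rewrite (divn_eq n 3) n_mod mulnC w_alpha_block // /phi_letter.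
  by case: (_ == 1); [left|right].
- by right; apply: w_alpha_mod3_2.
Qed.

Lemma w_alpha_3n1 (n : nat) : w_alpha (3 * n + 1) = w_alpha n.
Proof. by rewrite w_alpha_block // /phi_letter; case: (w_alpha_sign n) => ->. Qed.

Definition cube_at {T : Type} (w : nat -> T) (i p : nat) : Prop :=
  forall k : nat, (k < 2 * p)%N -> w (i + k)%N = w (i + k + p)%N.

Lemma cube_at_multiple (T : Type) (w : nat -> T) (i p j : nat) :
  (0 < p)%N -> (j < 3)%N -> cube_at w i p -> w (i + j * p)%N = w i.
Proof.
move=> p_gt0 lt_j3 cube; have w_ip : w (i + p)%N = w i.
  by have := cube 0%N; rewrite !addn0 => -> //; lia.
case: j lt_j3 => [|[|[|//]]] _; rewrite ?mul0n ?mul1n ?addn0 //.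
by rewrite -w_ip mulSn mul1n addnA -cube //; lia.
Qed.

Lemma ex_residue_mod3 (i p r : nat) : ~~ (3 %| p)%N -> (r < 3)%N ->
  exists2 j, (j < 3)%N & ((i + j * p) %% 3 = r)%N.
Proof.
move=> p_ndvd lt_r3.
have : ((i + 0 * p) %% 3 = r \/ (i + 1 * p) %% 3 = r \/ (i + 2 * p) %% 3 = r)%N
  by lia.
by case=> [|[|]]; [exists 0%N | exists 1%N | exists 2%N].
Qed.

Lemma w_alpha_no_cube_at (i p : nat) : (0 < p)%N -> ~~ (3 %| p)%N ->
  ~ cube_at w_alpha i p.
Proof.
move=> p_gt0 p_ndvd cube.
have [j0 lt_j0 mod_j0] := ex_residue_mod3 i p_ndvd (isT : 0 < 3)%N.
have [j2 lt_j2 mod_j2] := ex_residue_mod3 i p_ndvd (isT : 2 < 3)%N.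
have := w_alpha_mod3_0 mod_j0; have := w_alpha_mod3_2 mod_j2.
by rewrite !(cube_at_multiple p_gt0) // => ->.
Qed.

Section Descent.

Variables (T : Type) (w : nat -> T).
Hypothesis w_3n1 : forall n : nat, w (3 * n + 1)%N = w n.

Lemma cube_at_div3 (i q : nat) : cube_at w i (3 * q) -> cube_at w ((i + 1) %/ 3) q.
Proof.
move=> cube k lt_k; set m := ((i + 1) %/ 3)%N.
have := cube (3 * m + 1 + 3 * k - i)%N ltac:(lia).
have -> : (i + (3 * m + 1 + 3 * k - i))%N = (3 * (m + k) + 1)%N by lia.
have -> : (3 * (m + k) + 1 + 3 * q)%N = (3 * (m + k + q) + 1)%N by lia.
by rewrite !w_3n1.
Qed.

End Descent.

Lemma cube_free_of_ndvd3 (w : nat -> int) :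
  (forall n : nat, w (3 * n + 1)%N = w n) ->
  (forall i p : nat, (0 < p)%N -> ~~ (3 %| p)%N -> ~ cube_at w i p) ->
  cube_free w.
Proof.
move=> w_3n1 no_cube [i [p [p_gt0]]]; rewrite -/(cube_at w i p) => cube.
elim/ltn_ind: p i p_gt0 cube => p IHp i p_gt0 cube.
have [/dvdnP[q def_p] | p_ndvd] := boolP (3 %| p)%N; last exact: no_cube cube.
rewrite def_p mulnC in cube.
by apply: (IHp q _ _ _ (cube_at_div3 w_3n1 cube)); lia.
Qed.

Theorem mainTheorem2 : cube_free w_alpha.
Proof. exact: cube_free_of_ndvd3 w_alpha_3n1 w_alpha_no_cube_at. Qed.
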